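(* Let $\mathcal{I}$ be a finite set of closed intervals whose $2|\mathcal{I}|$ start- and endpoints are pairwise distinct, let $k\ge 1$, and let $X$ (the set of intervals of $\mathcal{I}$ together with all virtual elements) and $\mathcal{S}$ be produced by the construction described in the context. If $\chi:X\to\{1,\dots,k\}$ is a coloring such that, for every constraint $S\in\mathcal{S}$, any two distinct elements of $S$ receive distinct colors, then the restriction of $\chi$ to $\mathcal{I}$ is a balanced $k$-coloring of $\mathcal{I}$.
   Context: For a finite set $\mathcal{I}$ of closed intervals, a $k$-coloring is a map $\chi:\mathcal{I}\to\{1,\dots,k\}$; with $c_i(x)$ the number of intervals containing $x$ of color $i$, the coloring is balanced if $\max_{x\in\mathbb{R}}\max_{i,j}|c_i(x)-c_j(x)|\le 1$. Construction. The events are the start- and endpoints of the intervals, scanned in increasing order. We maintain a list of active events (initially empty), a growing ground set $X$ (initially $\mathcal{I}$) and a family $\mathcal{S}$ of constraints (subsets/tuples of $X$, initially empty). Whenever the active list is empty, the type of the next event (start or end) fixes the type of the current phase. Start phase: startpoints are appended to the active list. (a) If the active list contains startpoints of $k$ elements $I_1,\dots,I_k$ (actual intervals or virtual elements), add the constraint $(I_1,\dots,I_k)$ to $\mathcal{S}$ and clear the active list. (b) If the active list contains startpoints of $I_1,\dots,I_j$ with $j<k$ and the next event is the endpoint of some interval $I_{j+1}$, create new virtual elements $x_{j+1},\dots,x_k,y_1,\dots,y_{j-1}$ (added to $X$, not used before), add the two constraints $(I_1,\dots,I_j,x_{j+1},\dots,x_k)$ and $(y_1,\dots,y_{j-1},I_{j+1},x_{j+1},\dots,x_k)$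 to $\mathcal{S}$, and replace the active list by the (virtual) startpoints of $y_1,\dots,y_{j-1}$ (the phase remains a start phase; if $j=1$ the list becomes empty). End phase: symmetric, with the roles of start- and endpoints interchanged (endpoints are accumulated; $k$ accumulated endpoints yield one constraint and clear the list; encountering a startpoint of an interval $I_{j+1}$ after $j<k$ accumulated endpoints yields the two analogous constraints with fresh virtual elements and the list is replaced by virtual endpoints of $y_1,\dots,y_{j-1}$). *)

From HB Require Import structures.
From mathcomp Require Import all_boot all_order all_algebra.
Set Implicit Arguments. Unset Strict Implicit. Unset Printing Implicit Defensive.
Import Order.TTheory GRing.Theory Num.Theory.

(* A family of n closed intervals [ (I i).1, (I i).2 ], indexed by 'I_n.
   Elements of the ground set X: actual intervals (inl i) or virtual
   elements (inr m), m a natural-number name. *)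
Definition Elem (n : nat) := ('I_n + nat)%type.

(* An event: the startpoint (true) or endpoint (false) of interval i. *)
Definition event (n : nat) := ('I_n * bool)%type.

Definition events (n : nat) : seq (event n) :=
  [seq (i, b) | i <- enum 'I_n, b <- [:: true; false]].

Section Construction.
Variables (R : realFieldType) (n : nat) (I : 'I_n -> R * R).

Definition evpos (e : event n) : R := if e.2 then (I e.1).1 else (I e.1).2.

Definition sorted_events : seq (event n) :=
  sort (fun e f : event n => (evpos e <= evpos f)%R) (events n).

End Construction.

(* State of the scan: (phase type (true = start phase, false = end phase),
   active list, next fresh virtual name, constraints produced so far). *)
Definition cstate (n : nat) :=
  (bool * seq (Elem n) * nat * seq (seq (Elem n)))%type.

Definition step (n k : nat) (st : cstate n) (ev : Elem n * bool) : cstate n :=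
  let '(ph0, act, fr, Ss) := st in
  let '(x, b) := ev in
  let ph := if nilp act then b else ph0 in
  if b == ph then
    let act' := rcons act x in
    if size act' == k then (ph, [::], fr, rcons Ss act')
    else (ph, act', fr, Ss)
  else
    let j := size act in
    let xs := [seq (inr (fr + m) : Elem n) | m <- iota 0 (k - j)] in
    let ys := [seq (inr (fr + (k - j) + m) : Elem n) | m <- iota 0 j.-1] in
    (ph, ys, fr + (k - j) + j.-1, Ss ++ [:: act ++ xs; ys ++ x :: xs]).

Definition constraints (R : realFieldType) (n k : nat) (I : 'I_n -> R * R)
  : seq (seq (Elem n)) :=
  (foldl (@step n k) (true, [::], 0%N, [::])
     [seq (inl e.1 : Elem n, e.2) | e <- sorted_events I]).2.

Definition color_count (R : realFieldType) (n k : nat) (I : 'I_n -> R * R)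
  (col : 'I_n -> 'I_k) (c : 'I_k) (x : R) : nat :=
  #|[set j : 'I_n | ((I j).1 <= x <= (I j).2)%R && (col j == c)]|.

Definition balanced (R : realFieldType) (n k : nat) (I : 'I_n -> R * R)
  (col : 'I_n -> 'I_k) : Prop :=
  forall (x : R) (c c' : 'I_k),
    (`| (color_count I col c x)%:Z - (color_count I col c' x)%:Z | <= 1)%R.

From HB Require Import structures.
From mathcomp Require Import all_boot all_order all_algebra.
From mathcomp Require Import zify.
Import Order.TTheory GRing.Theory Num.Theory.
Set Implicit Arguments. Unset Strict Implicit. Unset Printing Implicit Defensive.

(* Sweep from left to right. The number of intervals of colour c containing x
   is the signed count (+1 per startpoint, -1 per endpoint) of the c-coloured
   events passed so far. A constraint has k distinct colours, so every colour
   occurs in it exactly once. Hence, up to an offset common to all colours,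
   the signed count of c equals +-(multiplicity of c in the active list), the
   sign being that of the phase: a completed constraint shifts every colour
   by the same amount, and in case (b) the two constraints sharing x_(j+1),
   ..., x_k force mult_c(y) = mult_c(I_1..I_j) - [chi I_(j+1) = c]. At the end
   all signed counts vanish, which forces the final active list to be empty;
   so every active list is a prefix of a later constraint and contains each
   colour at most once. Two colour counts thus differ by at most one. *)

Section Scan.
Variables n k : nat.
Implicit Types (st : cstate n) (p s : seq (Elem n * bool)).

Definition init_state : cstate n := (true, [::], 0%N, [::]).
Definition phase st := st.1.1.1.
Definition active st := st.1.1.2.
Definition fresh st := st.1.2.
Definition constrs st := st.2.

Definition virtuals (a l : nat) : seq (Elem n) := [seq inr (a + m) | m <- iota 0 l].

Lemma mem_virtuals a l (y : Elem n) :
  (y \in virtuals a l) = (if y is inr m then (a <= m < a + l)%N else false).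
Proof.
case: y => [i|m]; first by apply/negbTE/mapP => -[].
apply/mapP/idP => [[m' + [->]]|Hm]; first by rewrite mem_iota; lia.
by exists (m - a); [rewrite mem_iota | congr inr]; lia.
Qed.

Lemma size_virtuals a l : size (virtuals a l) = l.
Proof. by rewrite size_map size_iota. Qed.

Lemma uniq_virtuals a l : uniq (virtuals a l).
Proof. by rewrite map_inj_uniq ?iota_uniq // => u v [] /addnI. Qed.

Lemma constrs_step_subset st e : {subset constrs st <= constrs (step k st e)}.
Proof.
case: st => [[[ph0 act] fr] Ss]; case: e => x b; rewrite /step /constrs /=.
case: ifP => _; [case: ifP => _ |] => /= C HC;
  by rewrite ?mem_rcons ?mem_cat ?in_cons HC ?orbT.
Qed.

Lemma constrs_foldl_subset st s : {subset constrs st <= constrs (foldl (step k) st s)}.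
Proof. by elim: s st => [|e s IH] st //= C /(constrs_step_subset e) /IH. Qed.

Lemma active_foldl_extends st s :
  (exists r, active (foldl (step k) st s) = active st ++ r) \/
  (exists2 C, C \in constrs (foldl (step k) st s) & exists r, C = active st ++ r).
Proof.
elim: s st => [|[x b] s IH] st /=; first by left; exists [::]; rewrite cats0.
have [[r Hr]|[C HC Cr]] : (exists r, active (step k st (x, b)) = active st ++ r) \/
    (exists2 C, C \in constrs (step k st (x, b)) & exists r, C = active st ++ r).
- case: st => [[[ph0 act] fr] Ss]; rewrite /step /active /constrs /=.
  case: ifP => _; first case: ifP => _ /=.
  + by right; exists (rcons act x); [rewrite mem_rcons mem_head | exists [:: x]; rewrite cats1].
  + by left; exists [:: x]; rewrite cats1.
  + right; exists (act ++ virtuals fr (k - size act)); last by eexists.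
    by rewrite mem_cat inE eqxx orbT.
- have [[r' ->]|[C HC [r' HCr]]] := IH (step k st (x, b)).
  + by left; exists (r ++ r'); rewrite Hr catA.
  + by right; exists C => //; exists (r ++ r'); rewrite HCr Hr catA.
- by right; exists C => //; exact: constrs_foldl_subset.
Qed.

(* [p] is the list of events scanned so far; the last two conditions ensure
   that the elements added at the next step, actual or virtual, are not yet in
   the active list. *)
Definition wf_state st p : Prop :=
  [/\ forall C, C \in constrs st -> uniq C /\ size C = k,
      uniq (active st), (size (active st) < k)%N,
      forall m, inr m \in active st -> (m < fresh st)%N &
      forall i, inl i \in active st -> (inl i, phase st) \in p].

Lemma wf_step st p (i : 'I_n) b :
  wf_state st p -> (inl i, b) \notin p ->
  wf_state (step k st (inl i, b)) (rcons p (inl i, b)).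
Proof.
case: st => [[[ph0 act] fr] Ss]; rewrite /wf_state /step /active /constrs /fresh /phase /=.
case=> HS Hu Hsz Hfr Hin Hnew; set ph := (if nilp act then b else ph0).
have Hph : ~~ nilp act -> ph = ph0 by rewrite /ph => /negbTE ->.
case: ifP => /eqP Hb.
- have i_new : inl i \notin act.
    apply/negP => Hi; have Hne : ~~ nilp act by case: (act) Hi.
    by move: (Hin _ Hi); rewrite -(Hph Hne) -Hb (negbTE Hnew).
  have Hu' : uniq (rcons act (inl i)) by rewrite rcons_uniq i_new.
  case: ifP => /eqP Hk' /=.
  + split=> //; last lia.
    by move=> C; rewrite mem_rcons inE => /orP [/eqP ->|/HS].
  + rewrite size_rcons in Hk' *; split=> //; first lia.
    * by move=> m; rewrite mem_rcons inE => /Hfr.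
    * move=> j; rewrite !mem_rcons !inE => /orP [/eqP [->]|Hj]; first by rewrite -Hb eqxx.
      have Hne : ~~ nilp act by case: (act) Hj.
      by rewrite (Hph Hne) Hin ?orbT.
- have Hne : ~~ nilp act by move: Hb; rewrite /ph; case: (nilp act).
  have Hj : (0 < size act)%N by case: (act) Hne.
  rewrite -/(virtuals fr (k - size act)) -/(virtuals (fr + (k - size act)) (size act).-1).
  split; last by move=> j; rewrite mem_virtuals.
  + move=> C; rewrite mem_cat !inE => /orP [/HS //|/orP [/eqP ->|/eqP ->]].
    * rewrite cat_uniq Hu uniq_virtuals size_cat size_virtuals andbT.
      split; last by rewrite subnKC // ltnW.
      apply/hasPn => y; rewrite mem_virtuals; case: y => // m /andP [Hm _].
      by apply/negP => /Hfr; rewrite ltnNge Hm.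
    * rewrite cat_uniq /= !uniq_virtuals !mem_virtuals /= andbT.
      rewrite size_cat /= !size_virtuals; split; last lia.
      apply/hasPn => y; rewrite !mem_virtuals; case: y => // m /andP [_ Hm].
      by rewrite leqNgt Hm.
  + exact: uniq_virtuals.
  + by rewrite size_virtuals; lia.
  + by move=> m; rewrite mem_virtuals => /andP [_].
Qed.

Lemma wf_foldl s st p :
  wf_state st p -> uniq (p ++ s) -> all (fun e => if e.1 is inl _ then true else false) s ->
  wf_state (foldl (step k) st s) (p ++ s).
Proof.
elim: s st p => [|[[i|//] b] s IH] st p; first by rewrite cats0.
move=> Hwf Hu /= Hs; rewrite -cat_rcons; apply: IH; rewrite ?cat_rcons //.
by apply: wf_step; move: Hu; rewrite cat_uniq /= => /and3P [_ /norP []].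
Qed.

End Scan.

Arguments virtuals {n}.

Local Open Scope ring_scope.

Definition sgn (b : bool) : int := if b then 1 else -1.

Section Coloring.
Variables (n k : nat) (chi : Elem n -> 'I_k).
Implicit Types (st : cstate n) (p : seq (Elem n * bool)) (s C : seq (Elem n)).

Definition color_mult (c : 'I_k) s : nat := count (fun y => chi y == c) s.

Definition rainbow C := forall c, color_mult c C = 1%N.

(* For the prefix of the sorted events passed at a point [x], this is the
   number of intervals of colour [c] containing [x]. *)
Definition signed_count (c : 'I_k) p : int := \sum_(e <- p | chi e.1 == c) sgn e.2.

Lemma color_mult_map c s : color_mult c s = count (pred1 c) (map chi s).
Proof. by rewrite count_map. Qed.

Lemma color_mult_cat c s s' : color_mult c (s ++ s') = (color_mult c s + color_mult c s')%N.
Proof. exact: count_cat. Qed.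

Lemma color_mult_rcons c s x : color_mult c (rcons s x) = (color_mult c s + (chi x == c))%N.
Proof. by rewrite -cats1 color_mult_cat /= addn0. Qed.

Lemma signed_count_rcons c p e :
  signed_count c (rcons p e) = signed_count c p + (if chi e.1 == c then sgn e.2 else 0).
Proof. exact: big_rcons. Qed.

Lemma rainbow_of_injective C : uniq C -> size C = k -> {in C &, injective chi} -> rainbow C.
Proof.
move=> Cu Csz chi_inj c; rewrite color_mult_map count_uniq_mem ?map_inj_in_uniq //.
have /subset_cardP/(_ (subset_predT _)) -> // : #|map chi C| = #|'I_k|.
by rewrite (card_uniqP _) ?map_inj_in_uniq // size_map Csz card_ord.
Qed.

Lemma color_mult_le1 C s r c : rainbow C -> C = s ++ r -> (color_mult c s <= 1)%N.
Proof. by move=> /(_ c) + Cs; rewrite Cs color_mult_cat; lia. Qed.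

Lemma color_mult_const_nil s :
  (size s < k)%N -> (forall c c', color_mult c s = color_mult c' s) -> s = [::].
Proof.
case: s => [//|x s] Hsz Hconst; exfalso.
have [c0 c0_out] : exists c0, c0 \notin map chi (x :: s).
  apply/existsP; rewrite -negb_forall; apply: contraTN Hsz => /forallP all_in.
  rewrite -leqNgt -(card_ord k) -(size_map chi); apply: leq_trans (card_size _).
  by apply/subset_leq_card/subsetP => c _; exact: all_in.
by move: (Hconst c0 (chi x)); rewrite !color_mult_map (count_memPn c0_out) /= eqxx.
Qed.

Definition sweep_inv st p : Prop :=
  exists base : int, forall c,
    signed_count c p = base + sgn (phase st) * (color_mult c (active st))%:Z.

Lemma sweep_inv_step st p e :
  sweep_inv st p -> (forall C, C \in constrs (step k st e) -> rainbow C) ->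
  sweep_inv (step k st e) (rcons p e).
Proof.
case: st => [[[ph0 act] fr] Ss]; case: e => x b [base Hbase].
rewrite /step /constrs /phase /active /= in Hbase *.
set ph := (if nilp act then b else ph0).
have Hph c : sgn ph0 * (color_mult c act)%:Z = sgn ph * (color_mult c act)%:Z.
  by rewrite /ph; case: (act) => //=; rewrite !mulr0.
case: ifP => /eqP Hb.
- case: ifP => _ /= Hrainbow.
  + have full : rainbow (rcons act x) by apply: Hrainbow; rewrite mem_rcons mem_head.
    exists (base + sgn ph) => c; move: (full c).
    rewrite signed_count_rcons Hbase Hph color_mult_rcons /= -Hb /color_mult /= mulr0 addr0.
    by case: (chi x == c); case: (b) => /=; lia.
  + exists base => c.
    rewrite signed_count_rcons Hbase Hph color_mult_rcons /= -Hb.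
    by case: (chi x == c); rewrite /= ?addn0 ?addr0 // PoszD mulrDr addrA mulr1.
- rewrite -/(virtuals fr (k - size act)) -/(virtuals (fr + (k - size act)) (size act).-1).
  move=> Hrainbow; exists base => c.
  have H1 : rainbow (act ++ virtuals fr (k - size act)).
    by apply: Hrainbow; rewrite /= mem_cat !inE eqxx orbT.
  have H2 : rainbow (virtuals (fr + (k - size act)) (size act).-1 ++
                     x :: virtuals fr (k - size act)).
    by apply: Hrainbow; rewrite /= mem_cat !inE eqxx !orbT.
  have Hne : ~~ nilp act by move: Hb; rewrite /ph; case: (nilp act).
  have Hph0 : ph = ph0 by rewrite /ph (negbTE Hne).
  move: Hb (H1 c) (H2 c).
  rewrite signed_count_rcons Hbase !color_mult_cat /= Hph0 /active /color_mult /=.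
  by case: (chi x == c); case: (ph0); case: (b) => //= _; lia.
Qed.

Lemma sweep_inv_foldl (es : seq (Elem n * bool)) st p :
  sweep_inv st p -> (forall C, C \in constrs (foldl (step k) st es) -> rainbow C) ->
  sweep_inv (foldl (step k) st es) (p ++ es).
Proof.
elim: es st p => [|e es IH] st p /=; first by rewrite cats0.
move=> Hinv Hrainbow; rewrite -cat_rcons; apply: IH => //.
by apply: sweep_inv_step => // C HC; apply: Hrainbow; exact: constrs_foldl_subset.
Qed.

Section Sweep.
Variable L : seq (Elem n * bool).
Let scan t := foldl (step k) (init_state n) (take t L).
Let final := foldl (step k) (init_state n) L.
Hypothesis rainbow_final : forall C, C \in constrs final -> rainbow C.
Hypothesis active_final_small : (size (active final) < k)%N.
Hypothesis signed_count_const : forall c c', signed_count c L = signed_count c' L.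

Lemma sweep_inv_scan t : sweep_inv (scan t) (take t L).
Proof.
apply: (sweep_inv_foldl (p := [::])).
  by exists 0 => c; rewrite /signed_count big_nil mulr0 addr0.
move=> C HC; apply: rainbow_final.
by rewrite /final -(cat_take_drop t L) foldl_cat; exact: constrs_foldl_subset.
Qed.

Lemma active_final_nil : active final = [::].
Proof.
have [base Hbase] := sweep_inv_scan (size L); rewrite take_size in Hbase.
apply: color_mult_const_nil => // c c'; move: (signed_count_const c c').
rewrite !Hbase /scan take_size -/final; case: (phase final) => /=; lia.
Qed.

Lemma color_mult_active_scan t c : (color_mult c (active (scan t)) <= 1)%N.
Proof.
have final_split : foldl (step k) (scan t) (drop t L) = final.
  by rewrite /scan -foldl_cat cat_take_drop.
have [[r]|[C + [r]]] := active_foldl_extends k (scan t) (drop t L); rewrite final_split.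
- by rewrite active_final_nil; case: (active (scan t)).
- by move=> /rainbow_final; exact: color_mult_le1.
Qed.

Lemma signed_count_take_balanced t c c' :
  `|signed_count c (take t L) - signed_count c' (take t L)| <= 1.
Proof.
have [base Hbase] := sweep_inv_scan t; rewrite !Hbase.
move: (color_mult_active_scan t c) (color_mult_active_scan t c').
by case: (phase (scan t)) => /=; lia.
Qed.

End Sweep.

End Coloring.

Lemma filter_take_count (T : eqType) (P : pred T) (s : seq T) :
  pairwise (fun a b => P b ==> P a) s -> filter P s = take (count P s) s.
Proof.
elim: s => [//|a s IH] /= /andP [Pa_first Hs].
case: ifP => Pa /=; first by rewrite IH.
have none : count P s = 0%N.
  apply/eqP; rewrite -leqn0 leqNgt -has_count; apply/hasPn => b /(allP Pa_first).
  by rewrite Pa; case: (P b).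
by apply/eqP; rewrite none take0 -size_eq0 size_filter none.
Qed.

Lemma sum_events n (V : nmodType) (F : event n -> V) :
  \sum_(e <- events n) F e = \sum_(i < n) (F (i, true) + F (i, false)).
Proof.
by rewrite big_allpairs big_enum; apply: eq_bigr => i _; rewrite !big_cons big_nil /= addr0.
Qed.

Lemma signed_sum_events n (P : pred 'I_n) : \sum_(e <- events n | P e.1) sgn e.2 = 0.
Proof. by rewrite big_mkcond sum_events big1 // => i _ /=; case: (P i); rewrite ?addrN ?addr0. Qed.

Section Events.
Variables (R : realFieldType) (n : nat) (I : 'I_n -> R * R).
Hypothesis I_closed : forall i, (I i).1 <= (I i).2.
Hypothesis evpos_uniq : uniq [seq evpos I e | e <- events n].

(* The event [e] lies on or before the sweep point [x]: a startpoint at [x]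
   is already inside the sweep, an endpoint at [x] not yet. *)
Definition passed (x : R) (e : event n) : bool :=
  if e.2 then evpos I e <= x else evpos I e < x.

Lemma pairwise_sorted_events : pairwise (fun e f => evpos I e < evpos I f) (sorted_events I).
Proof.
have perm_evs : perm_eq (sorted_events I) (events n) by rewrite perm_sort.
rewrite -(pairwise_map (evpos I) Order.lt) -lt_sorted_pairwise lt_sorted_uniq_le.
rewrite (perm_uniq (perm_map _ perm_evs)) evpos_uniq sorted_map /=.
by apply: sort_sorted => e f; exact: le_total.
Qed.

Lemma filter_passed_sorted_events x :
  filter (passed x) (sorted_events I) =
  take (count (passed x) (sorted_events I)) (sorted_events I).
Proof.
apply: filter_take_count; apply: sub_pairwise pairwise_sorted_events => e f ef.
apply/implyP; rewrite /passed; case: f.2; case: e.2 => /= fx.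
- exact: ltW (lt_le_trans ef fx).
- exact: lt_le_trans ef fx.
- exact: ltW (lt_trans ef fx).
- exact: lt_trans ef fx.
Qed.

Lemma color_count_passed k (col : 'I_n -> 'I_k) c x :
  (color_count I col c x)%:Z = \sum_(e <- events n | passed x e && (col e.1 == c)) sgn e.2.
Proof.
rewrite /color_count -sum1dep_card -natz natr_sum big_mkcond [RHS]big_mkcond sum_events /=.
apply: eq_bigr => i _; rewrite /passed /=.
have := I_closed i.
case: (col i == c); case: (leP (I i).1 x) => Hs; case: (ltP (I i).2 x) => He //=;
  rewrite ?addr0 ?subrr // => Hi.
by have := lt_trans (le_lt_trans Hi He) Hs; rewrite ltxx.
Qed.

End Events.

Theorem lemma3 (R : realFieldType) (n k : nat) (I : 'I_n -> R * R)
  (Hint : forall i : 'I_n, ((I i).1 <= (I i).2)%R)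
  (Hdistinct : uniq [seq evpos I e | e <- events n])
  (Hk : (0 < k)%N)
  (chi : Elem n -> 'I_k)
  (Hchi : forall C, C \in constraints k I ->
            forall x y, x \in C -> y \in C -> x != y -> chi x != chi y) :
  balanced I (fun i => chi (inl i)).
Proof.
set L := [seq (inl e.1 : Elem n, e.2) | e <- sorted_events I].
have perm_evs : perm_eq (sorted_events I) (events n) by rewrite perm_sort.
have [wf_constrs _ active_small _ _] : wf_state k (foldl (step k) (init_state n) L) L.
  apply: (wf_foldl (p := [::])) => //; last by apply/allP => e /mapP [? _ ->].
  rewrite map_inj_uniq ?(perm_uniq perm_evs) ?(map_uniq Hdistinct) //.
  by move=> [i b] [j b'] [-> ->].
have rainbow_final C : C \in constraints k I -> rainbow chi C.
  move=> HC; have [Cu Csz] := wf_constrs C HC; apply: rainbow_of_injective => //.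
  move=> x y Hx Hy /eqP chi_xy; apply/eqP; apply: contraTT chi_xy.
  exact: Hchi C HC x y Hx Hy.
have signed_count_L c : signed_count chi c L = 0.
  rewrite /signed_count big_map (perm_big _ perm_evs).
  exact: (signed_sum_events (fun i => chi (inl i) == c)).
move=> x c c'.
set t := count (passed I x) (sorted_events I).
have color_count_scan c0 :
    (color_count I (fun i => chi (inl i)) c0 x)%:Z = signed_count chi c0 (take t L).
  rewrite (color_count_passed Hint) /signed_count -map_take -filter_passed_sorted_events //.
  by rewrite big_map big_filter_cond (perm_big _ perm_evs).
rewrite !color_count_scan; apply: signed_count_take_balanced => // c1 c2.
by rewrite !signed_count_L.
Qed.
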